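(* Let $\mathcal{G}$ be a directed graph consisting of a single cycle over $k+1$ nodes indexed $0,1,\dots,k$, with edges $\ell_1,\dots,\ell_{k+1}$ where $\ell_i$ joins nodes $i-1$ and $i$ for $i=1,\dots,k$ and $\ell_{k+1}$ joins nodes $k$ and $0$ (each edge carries an arbitrary orientation). Each edge is either a lossy pipe $\ell=(m,n)$ with parameter $a_\ell>0$, or a compressor $\ell=(m,n)$ with ratio $\alpha_\ell>0$; assume at least one edge is a lossy pipe. Let $\mathbf{n}\in\{\pm1\}^{k+1}$ be the cycle indicator vector for the cycle direction $0\to1\to\dots\to k\to 0$: $n_i=+1$ if the orientation of $\ell_i$ agrees with this direction and $n_i=-1$ otherwise. Say a pair $(\boldsymbol{\phi},\boldsymbol{\psi})\in\mathbb{R}^{k+1}\times\mathbb{R}^{k+1}$ is admissible if $\psi_m-\psi_n=a_\ell\,\mathrm{sign}(\phi_\ell)\phi_\ell^2$ for every lossy pipe $\ell=(m,n)$, $\psi_j\ge 0$ for every node $j$, and $\psi_n=\alpha_\ell\psi_m$, $\phi_\ell\ge0$ for every compressor $\ell=(m,n)$. Suppose $(\boldsymbol{\phi},\boldsymbol{\psi})$ and $(\tilde{\boldsymbol{\phi}},\tilde{\boldsymbol{\psi}})$ are admissible with $\psi_0=\tilde{\psi}_0$ and $\tilde{\boldsymbol{\phi}}\neq\boldsymbol{\phi}$. Then it is neither the case that $\mathrm{sign}(\tilde{\boldsymbol{\phi}}-\boldsymbol{\phi})\odot\mathbf{n}<\mathbf{0}$ entrywise, nor the case that $\mathrm{sign}(\tilde{\boldsymbol{\phi}}-\boldsymbol{\phi})\odot\mathbf{n}>\mathbf{0}$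 entrywise.
   Context: $\mathrm{sign}$ is applied entrywise, with $\mathrm{sign}(x)=+1$ for $x>0$, $-1$ for $x<0$, $0$ for $x=0$; $\odot$ denotes entrywise product of vectors. *)

From mathcomp Require Import all_boot all_order all_algebra.
From mathcomp Require Import reals.
Set Implicit Arguments. Unset Strict Implicit. Unset Printing Implicit Defensive.
Import Order.TTheory GRing.Theory Num.Theory.
Local Open Scope ring_scope.

(* Cycle graph on k+1 nodes 'I_k.+1.  Edges are also indexed by 'I_k.+1:
   edge l (0-based; this is the paper's edge ell_{l+1}) joins node l and node
   ordS l = (l+1) mod (k+1); so edge k joins node k and node 0.
   [orient l = true] means edge l is oriented l -> l+1 (agrees with the cycle
   direction 0 -> 1 -> ... -> k -> 0), otherwise it is oriented l+1 -> l. *)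

Definition etail (k : nat) (orient : 'I_k.+1 -> bool) (l : 'I_k.+1) : 'I_k.+1 :=
  if orient l then l else ordS l.
Definition ehead (k : nat) (orient : 'I_k.+1 -> bool) (l : 'I_k.+1) : 'I_k.+1 :=
  if orient l then ordS l else l.

Definition cycle_ind (R : numDomainType) (k : nat) (orient : 'I_k.+1 -> bool)
  (l : 'I_k.+1) : R := if orient l then 1 else -1.

(* [comp l = true]: edge l is a compressor with ratio c l;
   otherwise edge l is a lossy pipe with parameter c l.
   Edge l = (m, n) with m = etail l, n = ehead l. *)
Definition admissible (R : realType) (k : nat) (comp orient : 'I_k.+1 -> bool)
  (c : 'I_k.+1 -> R) (phi psi : 'rV[R]_k.+1) : Prop :=
  [/\ (forall l, ~~ comp l ->
         psi 0 (etail orient l) - psi 0 (ehead orient l)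
           = c l * Num.sg (phi 0 l) * phi 0 l ^+ 2),
      (forall j, 0 <= psi 0 j) &
      (forall l, comp l ->
         psi 0 (ehead orient l) = c l * psi 0 (etail orient l) /\ 0 <= phi 0 l)].

From mathcomp Require Import all_boot all_order all_algebra.
From mathcomp Require Import reals.
From mathcomp Require Import lra.
Set Implicit Arguments. Unset Strict Implicit. Unset Printing Implicit Defensive.
Import Order.TTheory GRing.Theory Num.Theory.
Local Open Scope ring_scope.

(* Let D j := psit_j - psi_j be the gap between the two pressure profiles.
   Compressors scale both profiles by the same positive ratio, so they preserve
   the sign of D; the pipe law is strictly increasing in the flow, so if every
   flow change points against the cycle direction, D strictly increases along
   every pipe in that direction.  Starting from D 0 = 0 and going once around
   the cycle, D stays nonnegative and becomes positive after the first pipe,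
   contradicting D 0 = 0.  Exchanging the two solutions handles the other sign. *)

Lemma ltr_sgr_sqr (R : realDomainType) (x y : R) :
  x < y -> Num.sg x * x ^+ 2 < Num.sg y * y ^+ 2.
Proof.
by move=> lt_xy; case: (sgrP x) => sx; case: (sgrP y) => sy;
  rewrite ?mul0r ?mul1r ?mulN1r; nra.
Qed.

Lemma val_iter_ordS (k i : nat) : val (iter i (@ordS k.+1) 0) = (i %% k.+1)%N.
Proof.
elim: i => [|i IHi] /=; first by rewrite mod0n.
by rewrite IHi -addn1 modnDml addn1.
Qed.

Lemma iter_ordS_period (k : nat) : iter k.+1 (@ordS k.+1) 0 = 0.
Proof. by apply: val_inj; rewrite val_iter_ordS modnn. Qed.

Lemma iter_ordS_ord (k : nat) (l : 'I_k.+1) : iter l (@ordS k.+1) 0 = l.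
Proof. by apply: val_inj; rewrite val_iter_ordS modn_small. Qed.

Section IterateSign.

Variables (R : realDomainType) (T : Type) (f : T -> T) (P : pred T) (D : T -> R).
Hypothesis D_lt : forall y, P y -> D y < D (f y).
Hypothesis sgr_D : forall y, ~~ P y -> Num.sg (D (f y)) = Num.sg (D y).

Lemma iter_ge0_gt0 x i :
  0 <= D x -> 0 <= D (iter i f x) /\
  ((exists2 j, (j < i)%N & P (iter j f x)) -> 0 < D (iter i f x)).
Proof.
have step y : 0 <= D y -> 0 <= D (f y) /\ (P y || (0 < D y) -> 0 < D (f y)).
  case: (boolP (P y)) => [Py | nPy] ge0_y.
    by have lt_fy := le_lt_trans ge0_y (D_lt Py); rewrite (ltW lt_fy).
  split=> [|/= gt0_y].
    by rewrite -sgr_ge0 sgr_D // sgr_ge0.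
  by rewrite -sgr_gt0 sgr_D // sgr_gt0.
move=> ge0_x; elim: i => [|i [ge0_i gt0_i]] /=; first by split=> // -[].
have [ge0_fi gt0_fi] := step _ ge0_i; split=> // -[j].
rewrite ltnS leq_eqVlt => /orP[/eqP-> Pi | lt_ji Pj]; apply: gt0_fi.
  by rewrite Pi.
by rewrite gt0_i ?orbT //; exists j.
Qed.

End IterateSign.

Section CycleGap.

Variables (R : realType) (k : nat) (comp orient : 'I_k.+1 -> bool).
Variable c : 'I_k.+1 -> R.
Hypothesis c_gt0 : forall l, 0 < c l.
Variables phi psi phit psit : 'rV[R]_k.+1.
Hypothesis adm : admissible comp orient c phi psi.
Hypothesis admt : admissible comp orient c phit psit.

Let gap j := psit 0 j - psi 0 j.

Lemma sgr_gap_compressor l : comp l -> Num.sg (gap (ordS l)) = Num.sg (gap l).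
Proof.
move=> comp_l; have [_ _ /(_ l comp_l) [eq_psi _]] := adm.
have [_ _ /(_ l comp_l) [eq_psit _]] := admt.
have sg_c : Num.sg (c l) = 1 by rewrite gtr0_sg.
move: eq_psi eq_psit; rewrite /gap /ehead /etail.
by case: (orient l) => -> ->; rewrite -mulrBr sgrM sg_c mul1r.
Qed.

Lemma gap_pipe_lt l : ~~ comp l ->
  Num.sg (phit 0 l - phi 0 l) * cycle_ind R orient l < 0 -> gap l < gap (ordS l).
Proof.
move=> pipe_l; have [/(_ l pipe_l) eq_psi _ _] := adm.
have [/(_ l pipe_l) eq_psit _ _] := admt.
have law_lt x y : x < y -> c l * Num.sg x * x ^+ 2 < c l * Num.sg y * y ^+ 2.
  by move=> lt_xy; rewrite -!mulrA ltr_pM2l // ltr_sgr_sqr.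
move: eq_psi eq_psit; rewrite /gap /cycle_ind /ehead /etail.
case: (orient l) => eq_psi eq_psit.
  rewrite mulr1 sgr_lt0 subr_lt0 => /law_lt; lra.
rewrite mulrN1 oppr_lt0 sgr_gt0 subr_gt0 => /law_lt; lra.
Qed.

Lemma not_all_flows_against_cycle :
  psi 0 0 = psit 0 0 -> (exists l, ~~ comp l) ->
  ~ (forall l, Num.sg (phit 0 l - phi 0 l) * cycle_ind R orient l < 0).
Proof.
move=> eq0 [l0 pipe_l0] against.
have gap0 : gap 0 = 0 by rewrite /gap eq0 subrr.
have gap0_ge0 : 0 <= gap 0 by rewrite gap0.
have [_ gap_gt0] := iter_ge0_gt0 (P := predC comp)
  (fun l pl => gap_pipe_lt pl (against l))
  (fun l nPl => sgr_gap_compressor (negbNE nPl)) k.+1 gap0_ge0.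
have : 0 < gap (iter k.+1 (@ordS k.+1) 0).
  by apply: gap_gt0; exists l0; rewrite ?iter_ordS_ord.
by rewrite iter_ordS_period gap0 ltxx.
Qed.

End CycleGap.

Theorem lemma2 (R : realType) (k : nat) (comp orient : 'I_k.+1 -> bool)
  (c : 'I_k.+1 -> R) (phi psi phit psit : 'rV[R]_k.+1) :
  (forall l, 0 < c l) ->
  (exists l, ~~ comp l) ->
  admissible comp orient c phi psi ->
  admissible comp orient c phit psit ->
  psi 0 0 = psit 0 0 ->
  phit <> phi ->
  ~ (forall l, Num.sg (phit 0 l - phi 0 l) * cycle_ind R orient l < 0) /\
  ~ (forall l, Num.sg (phit 0 l - phi 0 l) * cycle_ind R orient l > 0).
Proof.
move=> c_gt0 has_pipe adm admt eq0 _; split.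
  exact: (not_all_flows_against_cycle c_gt0 adm admt eq0 has_pipe).
move=> along; apply: (not_all_flows_against_cycle c_gt0 admt adm (esym eq0) has_pipe).
by move=> l; rewrite -opprB sgrN mulNr oppr_lt0.
Qed.
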